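(* Let a chemical reaction network satisfying (H1) and (H2) consist of exactly $N$ connected components, the $i$-th one ($1\le i\le N$) being \[ Y_i+S_{i,0}\rightleftarrows U_{i,1}\to Y_i+S_{i,1}\rightleftarrows\cdots\rightleftarrows U_{i,L_i}\to Y_i+S_{i,L_i}, \] with rate constants $a_{i,j}$ ($Y_i+S_{i,j-1}\to U_{i,j}$), $b_{i,j}$ ($U_{i,j}\to Y_i+S_{i,j-1}$), $c_{i,j}$ ($U_{i,j}\to Y_i+S_{i,j}$). Then the associated mass-action system is identifiable (all rate constants are identifiable) from the variables $s_{1,L_1},\dots,s_{N,L_N}$; moreover, for each $i$ it suffices to use the derivatives $s_{i,L_i}^{(\ell)}$ with $1\le\ell\le\max\{2,2L_i-1\}$.
   Context: Species are denoted by capital letters and their concentrations by the corresponding lower-case letters. A chemical reaction network is a finite directed graph whose vertices (complexes) are nonnegative integer combinations of species and whose edges $y\to y'$ (reactions) carry rate constants $k_{yy'}>0$; $\mathbf{k}$ denotes the vector of all rate constants. Under mass-action kinetics $\dot{\mathbf{x}}=\sum_{y\to y'}k_{yy'}\mathbf{x}^y(y'-y)$. For a polynomial $\varphi(\mathbf{x})$, $\dot\varphi=\sum_i \frac{\partial\varphi}{\partial x_i}\dot x_i$ with $\dot x_i$ replaced by the right-hand side; $\varphi^{(\ell)}$ is the $\ell$-th iterate; it is a polynomial in $\mathbf{x}$ with coefficients polynomial in $\mathbf{k}$. Identifiability: a map $\psi$ on $\mathbb{R}_{>0}^{\#\text{reactions}}$ is identifiable from variables $x_{i_1},\dots,x_{i_t}$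 using derivatives of orders $1\le\ell\le D$ if for all $\mathbf{k}^*,\mathbf{k}^{**}$, equality $x_{i_j}^{(\ell)}(\mathbf{x},\mathbf{k}^* )=x_{i_j}^{(\ell)}(\mathbf{x},\mathbf{k}^{**})$ as polynomials in $\mathbf{x}$ for all $1\le\ell\le D$, $1\le j\le t$ implies $\psi(\mathbf{k}^* )=\psi(\mathbf{k}^{**})$; the system is identifiable when this holds for $\psi=$ identity. Hypotheses. (H1) Every connected component has the form $Y+S_0\rightleftarrows U_1\to Y+S_1\rightleftarrows\cdots\rightleftarrows U_L\to Y+S_L$ (reactions $Y+S_{j-1}\to U_j$, $U_j\to Y+S_{j-1}$, $U_j\to Y+S_j$), with a unique enzyme $Y$; intermediate species $U_j$ are all distinct throughout the network; the non-intermediates $S_0,\dots,S_L$ of a component are pairwise distinct but may appear in other components (in any role); each complex lies in a unique component. For an intermediate $U$, $\mathscr{S}_U$ is the set of substrates/products of its component. (H2) The species admit a partition $\mathscr{S}^{(0)}\sqcup\cdots\sqcup\mathscr{S}^{(M)}$, $M\ge2$, nonempty parts, $\mathscr{S}^{(0)}$ = intermediates, such that for each intermediate $U$ with component enzyme $Y$ there is $\alpha\ge1$ with $\mathscr{S}_U\subseteq\mathscr{S}^{(\alpha)}$ and $Y\notin\mathscr{S}^{(\alpha)}$. *)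

From Stdlib Require Import Reals List Arith.
Import ListNotations.
Open Scope R_scope.

(** Species are natural numbers; species s has concentration variable x_s.
    A monomial is an exponent vector (list nat, missing entries = 0).
    A polynomial is a finite list of terms (coefficient, monomial); two
    polynomials are equal "as polynomials" iff all their coefficients agree. *)

Definition mon := list nat.
Definition mexp (m : mon) (s : nat) : nat := nth s m 0%nat.

Definition meqb (m1 m2 : mon) : bool :=
  forallb (fun s => Nat.eqb (mexp m1 s) (mexp m2 s))
          (seq 0 (Nat.max (length m1) (length m2))).

Definition madd (m1 m2 : mon) : mon :=
  map (fun s => (mexp m1 s + mexp m2 s)%nat) (seq 0 (Nat.max (length m1) (length m2))).

Definition munit (s : nat) : mon := repeat 0%nat s ++ [1%nat].

Definition mdec (m : mon) (s : nat) : mon :=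
  map (fun t => if Nat.eqb t s then (mexp m t - 1)%nat else mexp m t) (seq 0 (length m)).

Definition poly := list (R * mon).

Definition pcoef (p : poly) (m : mon) : R :=
  fold_right Rplus 0 (map (fun t => if meqb (snd t) m then fst t else 0) p).

Definition peq (p q : poly) : Prop := forall m : mon, pcoef p m = pcoef q m.

Definition pvar (s : nat) : poly := [(1, munit s)].

Definition pmul (p q : poly) : poly :=
  flat_map (fun t1 => map (fun t2 => (fst t1 * fst t2, madd (snd t1) (snd t2))) q) p.

Definition pderiv (s : nat) (p : poly) : poly :=
  map (fun t => (fst t * INR (mexp (snd t) s), mdec (snd t) s)) p.

(** * Mass-action kinetics.
    A reaction is (source complex y, target complex y', rate constant k). *)
Definition reaction := (mon * mon * R)%type.

(** right-hand side of  dx_s/dt = sum_{y -> y'} k x^y (y'_s - y_s) *)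
Definition rhs (rs : list reaction) (s : nat) : poly :=
  map (fun r => match r with (y, y', k) =>
         (k * (INR (mexp y' s) - INR (mexp y s)), y) end) rs.

(** Lie derivative  phi' = sum_s (d phi / d x_s) * xdot_s, summing over the
    species 0 .. nS-1 (nS bounds all species of the network). *)
Definition lie (nS : nat) (rs : list reaction) (p : poly) : poly :=
  flat_map (fun s => pmul (pderiv s p) (rhs rs s)) (seq 0 nS).

Fixpoint liter (nS : nat) (rs : list reaction) (l : nat) (p : poly) : poly :=
  match l with
  | O => p
  | S l' => lie nS rs (liter nS rs l' p)
  end.

(** Components i = 0..N-1 (paper: 1..N); component i has length L i, enzyme Y i,
    substrates/products S i 0, ..., S i (L i), intermediates U i 1, ..., U i (L i),
    and rate constants a i j (Y+S_{j-1} -> U_j), b i j (U_j -> Y+S_{j-1}),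
    c i j (U_j -> Y+S_j), for 1 <= j <= L i. *)

Definition cplx2 (y s : nat) : mon := madd (munit y) (munit s).

Definition comp_reactions (Y : nat) (S U : nat -> nat) (a b c : nat -> R) (L : nat)
  : list reaction :=
  flat_map (fun j =>
     [ (cplx2 Y (S (j - 1)%nat), munit (U j), a j);
       (munit (U j), cplx2 Y (S (j - 1)%nat), b j);
       (munit (U j), cplx2 Y (S j), c j) ]) (seq 1 L).

Definition network (N : nat) (L : nat -> nat) (Y : nat -> nat) (S U : nat -> nat -> nat)
  (a b c : nat -> nat -> R) : list reaction :=
  flat_map (fun i => comp_reactions (Y i) (S i) (U i) (a i) (b i) (c i) (L i)) (seq 0 N).

Definition is_intermediate (N : nat) (L : nat -> nat) (U : nat -> nat -> nat) (x : nat) : Prop :=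
  exists i j, (i < N)%nat /\ (1 <= j <= L i)%nat /\ x = U i j.

Definition is_species (N : nat) (L : nat -> nat) (Y : nat -> nat) (S U : nat -> nat -> nat)
  (x : nat) : Prop :=
  exists i, (i < N)%nat /\
    (x = Y i \/ (exists j, (j <= L i)%nat /\ x = S i j) \/
     (exists j, (1 <= j <= L i)%nat /\ x = U i j)).

Definition H1 (N : nat) (L : nat -> nat) (Y : nat -> nat) (S U : nat -> nat -> nat) : Prop :=
  (forall i, (i < N)%nat -> (1 <= L i)%nat) /\
  (forall i j i' j', (i < N)%nat -> (1 <= j <= L i)%nat ->
      (i' < N)%nat -> (1 <= j' <= L i')%nat -> U i j = U i' j' -> i = i' /\ j = j') /\
  (forall i j i', (i < N)%nat -> (1 <= j <= L i)%nat -> (i' < N)%nat ->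
      U i j <> Y i' /\ (forall j', (j' <= L i')%nat -> U i j <> S i' j')) /\
  (forall i j j', (i < N)%nat -> (j <= L i)%nat -> (j' <= L i)%nat ->
      S i j = S i j' -> j = j') /\
  (forall i j i' j', (i < N)%nat -> (j <= L i)%nat -> (i' < N)%nat -> (j' <= L i')%nat ->
      meqb (cplx2 (Y i) (S i j)) (cplx2 (Y i') (S i' j')) = true -> i = i').

Definition H2 (N : nat) (L : nat -> nat) (Y : nat -> nat) (S U : nat -> nat -> nat) : Prop :=
  exists (M : nat) (part : nat -> nat),
    (2 <= M)%nat /\
    (forall x, is_species N L Y S U x -> (part x <= M)%nat) /\
    (forall al, (al <= M)%nat -> exists x, is_species N L Y S U x /\ part x = al) /\
    (forall x, is_species N L Y S U x -> (part x = 0%nat <-> is_intermediate N L U x)) /\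
    (forall i, (i < N)%nat -> exists al, (1 <= al)%nat /\
        (forall j, (j <= L i)%nat -> part (S i j) = al) /\ part (Y i) <> al).

Definition pos_rates (N : nat) (L : nat -> nat) (a b c : nat -> nat -> R) : Prop :=
  forall i j, (i < N)%nat -> (1 <= j <= L i)%nat -> 0 < a i j /\ 0 < b i j /\ 0 < c i j.

(* Fix a component Y + S_0 <-> U_1 -> ... <-> U_L -> Y + S_L. By (H1) and (H2), no reaction of
   another component has its source complex made of species of this one, so in the
   derivatives of s_L the coefficients of monomials in its species obey a recursion involving only
   the rate constants a_j, b_j, c_j of the component.
   Give Y weight 0, S_k weight -2k and U_k weight 1 - 2k. A binding or a forward release lowers
   the weight of a monomial by one, a backward release raises it by one; hence the coefficients of
   the l-th derivative vanish above weight -2L + l, and at that weight the only nonzero one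
   belongs to y^q s_(L-q) (l = 2q) or y^q u_(L-q) (l = 2q + 1), where it is the product of the
   c's and a's met on the way down. Ratios of consecutive leading coefficients give every c_j and
   every a_j with j >= 2. Finally a_L c_L is the coefficient of y s_(L-1) in the second
   derivative, and b_j and a_1 are read off the coefficients of u_j s_(L-1) and y s_0 s_(L-1) in
   the third one (from the second one when L = 1). *)

From Pilot Require Import Defs.
From Stdlib Require Import Reals List Arith Lia Lra FunctionalExtensionality Classical.
Import ListNotations.
Open Scope R_scope.

(** * Finite sums *)

Definition sumR {A} (l : list A) (f : A -> R) : R := fold_right Rplus 0 (map f l).

Lemma sumR_nil {A} (f : A -> R) : sumR [] f = 0.
Proof. reflexivity. Qed.

Lemma sumR_cons {A} x l (f : A -> R) : sumR (x :: l) f = f x + sumR l f.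
Proof. reflexivity. Qed.

Lemma sumR_app {A} l1 l2 (f : A -> R) : sumR (l1 ++ l2) f = sumR l1 f + sumR l2 f.
Proof. induction l1; simpl; [unfold sumR; simpl; lra|]. rewrite !sumR_cons, IHl1. lra. Qed.

Lemma sumR_ext {A} l (f g : A -> R) : (forall x, In x l -> f x = g x) -> sumR l f = sumR l g.
Proof.
  induction l; intros H; [reflexivity|].
  rewrite !sumR_cons, H, IHl; [reflexivity| |left; reflexivity].
  intros; apply H; right; assumption.
Qed.

Lemma sumR_zero {A} l (f : A -> R) : (forall x, In x l -> f x = 0) -> sumR l f = 0.
Proof.
  intros H. rewrite (sumR_ext l f (fun _ => 0)) by assumption.
  induction l; [reflexivity|]. rewrite sumR_cons, IHl; [lra|]. intros; apply H; right; assumption.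
Qed.

Lemma sumR_plus {A} l (f g : A -> R) : sumR l (fun x => f x + g x) = sumR l f + sumR l g.
Proof. induction l; [unfold sumR; simpl; lra|]. rewrite !sumR_cons, IHl. lra. Qed.

Lemma sumR_scal {A} l (f : A -> R) c : sumR l (fun x => c * f x) = c * sumR l f.
Proof. induction l; [unfold sumR; simpl; lra|]. rewrite !sumR_cons, IHl. lra. Qed.

Lemma sumR_swap {A B} (l1 : list A) (l2 : list B) f :
  sumR l1 (fun x => sumR l2 (fun y => f x y)) = sumR l2 (fun y => sumR l1 (fun x => f x y)).
Proof.
  induction l1.
  - rewrite sumR_nil. symmetry. apply sumR_zero. intros; apply sumR_nil.
  - rewrite sumR_cons, IHl1, <- sumR_plus. apply sumR_ext. intros; rewrite sumR_cons; lra.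
Qed.

Lemma sumR_flat_map {A B} (g : A -> list B) l f :
  sumR (flat_map g l) f = sumR l (fun x => sumR (g x) f).
Proof. induction l; [reflexivity|]. simpl. rewrite sumR_app, sumR_cons, IHl. reflexivity. Qed.

Lemma sumR_map {A B} (h : A -> B) l f : sumR (map h l) f = sumR l (fun x => f (h x)).
Proof. unfold sumR. rewrite map_map. reflexivity. Qed.

Lemma sumR_single {A} (l : list A) f x0 :
  NoDup l -> In x0 l -> (forall x, In x l -> x <> x0 -> f x = 0) -> sumR l f = f x0.
Proof.
  induction l as [|x l IH]; intros Hnd Hin H; [destruct Hin|]. inversion Hnd; subst.
  rewrite sumR_cons. destruct (classic (x = x0)) as [->|Hne].
  - rewrite sumR_zero; [lra|]. intros x Hx. apply H; [right; assumption|]. intros ->; contradiction.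
  - destruct Hin as [->|Hin]; [congruence|]. rewrite H, IH; auto; [lra| |left; reflexivity].
    intros; apply H; auto; right; assumption.
Qed.

Lemma sumR_seq_three n (g : nat -> R) x y z :
  x <> y -> x <> z -> y <> z -> (x < n)%nat -> (y < n)%nat -> (z < n)%nat ->
  (forall s, s <> x -> s <> y -> s <> z -> g s = 0) -> sumR (seq 0 n) g = g x + g y + g z.
Proof.
  intros dxy dxz dyz hx hy hz H0.
  assert (Hpick : forall w, (w < n)%nat ->
            sumR (seq 0 n) (fun s => if (s =? w)%nat then g s else 0) = g w).
  { intros w hw. rewrite (sumR_single _ _ w); [|apply seq_NoDup|apply in_seq; lia|].
    - rewrite Nat.eqb_refl. reflexivity.
    - intros s _ Hs. destruct (Nat.eqb_spec s w); congruence. }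
  rewrite (sumR_ext _ _ (fun s => (if (s =? x)%nat then g s else 0)
                               + (if (s =? y)%nat then g s else 0)
                               + (if (s =? z)%nat then g s else 0))).
  - rewrite !sumR_plus, !Hpick by assumption. reflexivity.
  - intros s _. destruct (Nat.eqb_spec s x), (Nat.eqb_spec s y), (Nat.eqb_spec s z);
      subst; try congruence; try lra.
    rewrite H0; auto; lra.
Qed.

(** * Coefficients of Lie derivatives *)

Lemma mexp_overflow m s : (length m <= s)%nat -> mexp m s = 0%nat.
Proof. intros; unfold mexp; apply nth_overflow; assumption. Qed.

Lemma mexp_map_seq g n s : mexp (map g (seq 0 n)) s = if (s <? n)%nat then g s else 0%nat.
Proof.
  unfold mexp. destruct (Nat.ltb_spec s n).
  - rewrite nth_indep with (d' := g 0%nat) by (rewrite length_map, length_seq; lia).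
    rewrite map_nth, seq_nth by lia. reflexivity.
  - apply nth_overflow. rewrite length_map, length_seq; lia.
Qed.

Lemma meqb_spec m1 m2 : meqb m1 m2 = true <-> forall s, mexp m1 s = mexp m2 s.
Proof.
  unfold meqb; rewrite forallb_forall; split.
  - intros H s. destruct (Nat.lt_ge_cases s (Nat.max (length m1) (length m2))).
    + apply Nat.eqb_eq, H, in_seq; lia.
    + rewrite !mexp_overflow by lia. reflexivity.
  - intros H s _. apply Nat.eqb_eq, H.
Qed.

Lemma mexp_madd m1 m2 s : mexp (madd m1 m2) s = (mexp m1 s + mexp m2 s)%nat.
Proof.
  unfold madd. rewrite mexp_map_seq.
  destruct (Nat.ltb_spec s (Nat.max (length m1) (length m2))); auto.
  rewrite !mexp_overflow by lia. reflexivity.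
Qed.

Lemma mexp_munit s t : mexp (munit s) t = if (t =? s)%nat then 1%nat else 0%nat.
Proof.
  unfold munit, mexp. revert t; induction s; intros t.
  - destruct t as [|[|t]]; reflexivity.
  - destruct t; [reflexivity|]. apply IHs.
Qed.

Lemma mexp_mdec m s t :
  mexp (mdec m s) t = if (t =? s)%nat then (mexp m t - 1)%nat else mexp m t.
Proof.
  unfold mdec. rewrite mexp_map_seq. destruct (Nat.ltb_spec t (length m)); auto.
  rewrite !mexp_overflow by lia. destruct (t =? s)%nat; reflexivity.
Qed.

Lemma mexp_cplx2 y s t :
  mexp (cplx2 y s) t = ((if (t =? y)%nat then 1 else 0) + (if (t =? s)%nat then 1 else 0))%nat.
Proof. unfold cplx2. rewrite mexp_madd, !mexp_munit. reflexivity. Qed.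

Lemma meqb_ext_r m0 m1 m2 : (forall s, mexp m1 s = mexp m2 s) -> meqb m0 m1 = meqb m0 m2.
Proof.
  intros H. apply Bool.eq_true_iff_eq. rewrite !meqb_spec.
  split; intros E s; rewrite E; [|symmetry]; apply H.
Qed.

Lemma pcoef_ext p m1 m2 : (forall s, mexp m1 s = mexp m2 s) -> pcoef p m1 = pcoef p m2.
Proof.
  intros H. unfold pcoef. induction p; simpl; auto.
  rewrite IHp, (meqb_ext_r _ _ _ H). reflexivity.
Qed.

Lemma pcoef_sumR p m : pcoef p m = sumR p (fun t => if meqb (snd t) m then fst t else 0).
Proof. reflexivity. Qed.

Lemma pcoef_flat_map {A} (g : A -> Defs.poly) l m :
  pcoef (flat_map g l) m = sumR l (fun x => pcoef (g x) m).
Proof. rewrite pcoef_sumR, sumR_flat_map. reflexivity. Qed.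

(* [msub m y] is the quotient [x^m / x^y] and [mleb y m] tests that [x^y] divides [x^m]. *)
Definition msub (m y : mon) : mon :=
  map (fun t => (mexp m t - mexp y t)%nat) (seq 0 (Nat.max (length m) (length y))).

Definition mleb (y m : mon) : bool :=
  forallb (fun t => (mexp y t <=? mexp m t)%nat) (seq 0 (length y)).

Lemma mexp_msub m y t : mexp (msub m y) t = (mexp m t - mexp y t)%nat.
Proof.
  unfold msub. rewrite mexp_map_seq.
  destruct (Nat.ltb_spec t (Nat.max (length m) (length y))); auto.
  rewrite !mexp_overflow by lia. reflexivity.
Qed.

Lemma mleb_spec y m : mleb y m = true <-> forall t, (mexp y t <= mexp m t)%nat.
Proof.
  unfold mleb; rewrite forallb_forall; split.
  - intros H t. destruct (Nat.lt_ge_cases t (length y)).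
    + apply Nat.leb_le, H, in_seq; lia.
    + rewrite (mexp_overflow y) by lia. lia.
  - intros H t _. apply Nat.leb_le, H.
Qed.

Lemma pcoef_pmul P Q m : pcoef (pmul P Q) m =
  sumR Q (fun t2 => fst t2 * (if mleb (snd t2) m then pcoef P (msub m (snd t2)) else 0)).
Proof.
  unfold pmul. rewrite pcoef_flat_map.
  rewrite (sumR_ext _ _ (fun t1 => sumR Q (fun t2 =>
             if meqb (madd (snd t1) (snd t2)) m then fst t1 * fst t2 else 0))).
  2:{ intros t1 _. rewrite pcoef_sumR, sumR_map. reflexivity. }
  rewrite sumR_swap. apply sumR_ext. intros [c2 m2] _. simpl.
  destruct (mleb m2 m) eqn:Hle.
  - rewrite pcoef_sumR, <- sumR_scal. apply sumR_ext. intros [c1 m1] _. simpl.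
    rewrite mleb_spec in Hle.
    replace (meqb (madd m1 m2) m) with (meqb m1 (msub m m2)); [destruct (meqb _ _); lra|].
    apply Bool.eq_true_iff_eq. rewrite !meqb_spec. split; intros E s; specialize (E s);
      specialize (Hle s); rewrite ?mexp_madd, ?mexp_msub in *; lia.
  - rewrite Rmult_0_r. apply sumR_zero. intros [c1 m1] _. simpl.
    destruct (meqb (madd m1 m2) m) eqn:E1; auto.
    rewrite meqb_spec in E1. exfalso. assert (mleb m2 m = true); [|congruence].
    apply mleb_spec; intros s. rewrite <- E1, mexp_madd. lia.
Qed.

Lemma pcoef_pderiv s P m :
  pcoef (pderiv s P) m = INR (mexp m s + 1) * pcoef P (madd m (munit s)).
Proof.
  unfold pderiv. rewrite pcoef_sumR, sumR_map, pcoef_sumR, <- sumR_scal.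
  apply sumR_ext. intros [c m0] _. simpl.
  assert (Es : forall m', meqb m' (madd m (munit s)) = true -> mexp m' s = (mexp m s + 1)%nat).
  { intros m' E. rewrite meqb_spec in E. rewrite E, mexp_madd, mexp_munit, Nat.eqb_refl. reflexivity. }
  destruct (Nat.eq_dec (mexp m0 s) 0) as [Hz|Hnz].
  - destruct (meqb m0 (madd m (munit s))) eqn:E; [apply Es in E; lia|].
    rewrite Hz; change (INR 0) with 0. destruct (meqb (mdec m0 s) m); lra.
  - replace (meqb (mdec m0 s) m) with (meqb m0 (madd m (munit s))).
    + destruct (meqb m0 (madd m (munit s))) eqn:E; [|lra]. rewrite (Es _ E). lra.
    + apply Bool.eq_true_iff_eq. rewrite !meqb_spec. split; intros E t; specialize (E t);
        rewrite ?mexp_madd, ?mexp_munit, ?mexp_mdec in *;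
        destruct (Nat.eqb_spec t s); subst; lia.
Qed.

Lemma pcoef_lie nS rs P m : pcoef (lie nS rs P) m =
  sumR (seq 0 nS) (fun s => sumR rs (fun r => match r with (y, y', k) =>
     k * (INR (mexp y' s) - INR (mexp y s)) *
     (if mleb y m then INR (mexp (msub m y) s + 1) * pcoef P (madd (msub m y) (munit s))
      else 0) end)).
Proof.
  unfold lie. rewrite pcoef_flat_map. apply sumR_ext. intros s _.
  rewrite pcoef_pmul. unfold rhs. rewrite sumR_map. apply sumR_ext. intros [[y y'] k] _. simpl.
  rewrite pcoef_pderiv. reflexivity.
Qed.

(* Exponent vectors are handled as functions [f : nat -> nat]; [mon_of n f] is the monomial
   [prod_(t < n) x_t^(f t)]. *)
Definition mon_of (n : nat) (f : nat -> nat) : mon := map f (seq 0 n).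
Definition vanishes_from (n : nat) (f : nat -> nat) : Prop := forall t, (n <= t)%nat -> f t = 0%nat.

Lemma mexp_mon_of n f t : vanishes_from n f -> mexp (mon_of n f) t = f t.
Proof.
  intros H. unfold mon_of. rewrite mexp_map_seq.
  destruct (Nat.ltb_spec t n); auto. rewrite H; auto.
Qed.

Lemma mleb_munit_mon_of n f u :
  vanishes_from n f -> mleb (munit u) (mon_of n f) = (1 <=? f u)%nat.
Proof.
  intros Hv. apply Bool.eq_true_iff_eq. rewrite mleb_spec, Nat.leb_le. split.
  - intros H. specialize (H u). rewrite mexp_munit, Nat.eqb_refl, mexp_mon_of in H by auto. lia.
  - intros H t. rewrite mexp_munit, mexp_mon_of by auto. destruct (Nat.eqb_spec t u); subst; lia.
Qed.

Lemma mleb_cplx2_mon_of n f y s : vanishes_from n f -> y <> s ->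
  mleb (cplx2 y s) (mon_of n f) = andb (1 <=? f y)%nat (1 <=? f s)%nat.
Proof.
  intros Hv d. apply Bool.eq_true_iff_eq. rewrite mleb_spec, Bool.andb_true_iff, !Nat.leb_le.
  split.
  - intros H. split; [specialize (H y)|specialize (H s)];
      rewrite mexp_cplx2, mexp_mon_of, Nat.eqb_refl in H by auto; lia.
  - intros [H1 H2] t. rewrite mexp_cplx2, mexp_mon_of by auto.
    destruct (Nat.eqb_spec t y), (Nat.eqb_spec t s); subst; try congruence; lia.
Qed.

(* The contribution of reaction [r] and species [s] to the coefficient of [x^f] in [lie p],
   where [Gl] gives the coefficients of [p]. *)
Definition reaction_term nS (f : nat -> nat) (Gl : (nat -> nat) -> R) (s : nat) (r : reaction) : R :=
  match r with (y, y', k) => k * (INR (mexp y' s) - INR (mexp y s)) *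
    (if mleb y (mon_of nS f) then INR (f s - mexp y s + 1) *
       Gl (fun t => (f t - mexp y t + (if (t =? s)%nat then 1 else 0))%nat) else 0) end.

Lemma pcoef_liter_succ nS rs l P f : vanishes_from nS f ->
  pcoef (liter nS rs (S l) P) (mon_of nS f) =
  sumR rs (fun r => sumR (seq 0 nS) (fun s =>
    reaction_term nS f (fun g => pcoef (liter nS rs l P) (mon_of nS g)) s r)).
Proof.
  intros Hv. simpl. rewrite pcoef_lie, sumR_swap.
  apply sumR_ext. intros [[y y'] k] _. apply sumR_ext. intros s Hs. apply in_seq in Hs.
  unfold reaction_term. destruct (mleb y (mon_of nS f)); [|reflexivity].
  rewrite mexp_msub, mexp_mon_of by auto. do 2 f_equal. apply pcoef_ext. intros t.
  rewrite mexp_madd, mexp_msub, mexp_munit, mexp_mon_of by auto. unfold mon_of.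
  rewrite mexp_map_seq. destruct (Nat.ltb_spec t nS); auto.
  rewrite Hv by auto. destruct (Nat.eqb_spec t s); lia.
Qed.

Definition inc (f : nat -> nat) x : nat -> nat :=
  fun t => if (t =? x)%nat then (f t + 1)%nat else f t.
Definition dec (f : nat -> nat) x : nat -> nat :=
  fun t => if (t =? x)%nat then (f t - 1)%nat else f t.

(* The exponents [f - y - s + u] and [f - u + s] that the binding [y + s -> u] and the release
   [u -> y + s] connect to [f]. *)
Definition bind_exp f y s u : nat -> nat := inc (dec (dec f y) s) u.
Definition release_exp f u s : nat -> nat := inc (dec f u) s.

Lemma if_leb_zero (x : nat) (v : R) :
  ((1 <= x)%nat -> v = 0) -> (if (1 <=? x)%nat then v else 0) = 0.
Proof. intros H. destruct (Nat.leb_spec 1 x); auto. Qed.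

Lemma if_leb2_zero (x y : nat) (v : R) : ((1 <= x)%nat -> (1 <= y)%nat -> v = 0) ->
  (if andb (1 <=? x)%nat (1 <=? y)%nat then v else 0) = 0.
Proof. intros H. destruct (Nat.leb_spec 1 x), (Nat.leb_spec 1 y); simpl; auto. Qed.

Definition association_term (Gl : (nat -> nat) -> R) f y s u (k : R) : R :=
  if andb (1 <=? f y)%nat (1 <=? f s)%nat then
    k * (- INR (f y) * Gl (dec f s) - INR (f s) * Gl (dec f y)
         + INR (f u + 1) * Gl (bind_exp f y s u))
  else 0.

Definition dissociation_term (Gl : (nat -> nat) -> R) f y s u (k : R) : R :=
  if (1 <=? f u)%nat then
    k * (INR (f y + 1) * Gl (release_exp f u y) + INR (f s + 1) * Gl (release_exp f u s)
         - INR (f u) * Gl f)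
  else 0.

Lemma sum_reaction_term_association nS f Gl y s u k :
  vanishes_from nS f -> y <> s -> y <> u -> s <> u -> (y < nS)%nat -> (s < nS)%nat -> (u < nS)%nat ->
  sumR (seq 0 nS) (fun t => reaction_term nS f Gl t (cplx2 y s, munit u, k)) =
  association_term Gl f y s u k.
Proof.
  intros Hv d1 d2 d3 n1 n2 n3. rewrite (sumR_seq_three _ _ y s u); try assumption.
  2:{ intros t h1 h2 h3. unfold reaction_term. rewrite mexp_munit, mexp_cplx2.
      destruct (Nat.eqb_spec t u), (Nat.eqb_spec t y), (Nat.eqb_spec t s); try congruence.
      simpl. lra. }
  unfold reaction_term, association_term. rewrite mleb_cplx2_mon_of by auto.
  destruct (andb (1 <=? f y)%nat (1 <=? f s)%nat) eqn:GA; [|lra].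
  apply Bool.andb_true_iff in GA; destruct GA as [G1 G2]; apply Nat.leb_le in G1, G2.
  rewrite !mexp_munit, !mexp_cplx2, !Nat.eqb_refl.
  destruct (Nat.eqb_spec y u), (Nat.eqb_spec y s), (Nat.eqb_spec s u), (Nat.eqb_spec s y),
    (Nat.eqb_spec u y), (Nat.eqb_spec u s); try congruence.
  replace (fun t => (f t - mexp (cplx2 y s) t + (if (t =? y)%nat then 1 else 0))%nat)
    with (dec f s).
  2:{ extensionality t. rewrite mexp_cplx2. unfold dec.
      destruct (Nat.eqb_spec t y), (Nat.eqb_spec t s); subst; try congruence; lia. }
  replace (fun t => (f t - mexp (cplx2 y s) t + (if (t =? s)%nat then 1 else 0))%nat)
    with (dec f y).
  2:{ extensionality t. rewrite mexp_cplx2. unfold dec.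
      destruct (Nat.eqb_spec t y), (Nat.eqb_spec t s); subst; try congruence; lia. }
  replace (fun t => (f t - mexp (cplx2 y s) t + (if (t =? u)%nat then 1 else 0))%nat)
    with (bind_exp f y s u).
  2:{ extensionality t. rewrite mexp_cplx2. unfold bind_exp, inc, dec.
      destruct (Nat.eqb_spec t y), (Nat.eqb_spec t s), (Nat.eqb_spec t u);
        subst; try congruence; lia. }
  replace (f y - (1 + 0) + 1)%nat with (f y) by lia.
  replace (f s - (0 + 1) + 1)%nat with (f s) by lia.
  replace (f u - (0 + 0) + 1)%nat with (f u + 1)%nat by lia.
  simpl INR. lra.
Qed.

Lemma sum_reaction_term_dissociation nS f Gl y s u k :
  vanishes_from nS f -> y <> s -> y <> u -> s <> u -> (y < nS)%nat -> (s < nS)%nat -> (u < nS)%nat ->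
  sumR (seq 0 nS) (fun t => reaction_term nS f Gl t (munit u, cplx2 y s, k)) =
  dissociation_term Gl f y s u k.
Proof.
  intros Hv d1 d2 d3 n1 n2 n3. rewrite (sumR_seq_three _ _ y s u); try assumption.
  2:{ intros t h1 h2 h3. unfold reaction_term. rewrite mexp_munit, mexp_cplx2.
      destruct (Nat.eqb_spec t u), (Nat.eqb_spec t y), (Nat.eqb_spec t s); try congruence.
      simpl. lra. }
  unfold reaction_term, dissociation_term. rewrite mleb_munit_mon_of by auto.
  destruct (1 <=? f u)%nat eqn:GU; [|lra]. apply Nat.leb_le in GU.
  rewrite !mexp_munit, !mexp_cplx2, !Nat.eqb_refl.
  destruct (Nat.eqb_spec y u), (Nat.eqb_spec y s), (Nat.eqb_spec s u), (Nat.eqb_spec s y),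
    (Nat.eqb_spec u y), (Nat.eqb_spec u s); try congruence.
  replace (fun t => (f t - mexp (munit u) t + (if (t =? y)%nat then 1 else 0))%nat)
    with (release_exp f u y).
  2:{ extensionality t. rewrite mexp_munit. unfold release_exp, inc, dec.
      destruct (Nat.eqb_spec t y), (Nat.eqb_spec t u); subst; try congruence; lia. }
  replace (fun t => (f t - mexp (munit u) t + (if (t =? s)%nat then 1 else 0))%nat)
    with (release_exp f u s).
  2:{ extensionality t. rewrite mexp_munit. unfold release_exp, inc, dec.
      destruct (Nat.eqb_spec t s), (Nat.eqb_spec t u); subst; try congruence; lia. }
  replace (fun t => (f t - mexp (munit u) t + (if (t =? u)%nat then 1 else 0))%nat) with f.
  2:{ extensionality t. rewrite mexp_munit. destruct (Nat.eqb_spec t u); subst; lia. }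
  replace (f y - 0 + 1)%nat with (f y + 1)%nat by lia.
  replace (f s - 0 + 1)%nat with (f s + 1)%nat by lia.
  replace (f u - 1 + 1)%nat with (f u) by lia.
  simpl INR. lra.
Qed.

Lemma association_term_lead Gl f y s u k :
  ((1 <= f y)%nat -> (1 <= f s)%nat -> Gl (dec f s) = 0 /\ Gl (dec f y) = 0) ->
  association_term Gl f y s u k =
  if andb (1 <=? f y)%nat (1 <=? f s)%nat then k * INR (f u + 1) * Gl (bind_exp f y s u) else 0.
Proof.
  intros H. unfold association_term.
  destruct (andb (1 <=? f y)%nat (1 <=? f s)%nat) eqn:GA; [|reflexivity].
  apply andb_prop in GA; destruct GA as [G1 G2]; apply Nat.leb_le in G1, G2.
  destruct (H G1 G2) as [-> ->]. lra.
Qed.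

Lemma dissociation_term_lead Gl f y s u k :
  ((1 <= f u)%nat -> Gl (release_exp f u y) = 0 /\ Gl f = 0) ->
  dissociation_term Gl f y s u k =
  if (1 <=? f u)%nat then k * INR (f s + 1) * Gl (release_exp f u s) else 0.
Proof.
  intros H. unfold dissociation_term.
  destruct (1 <=? f u)%nat eqn:GU; [|reflexivity]. apply Nat.leb_le in GU.
  destruct (H GU) as [-> ->]. lra.
Qed.

Lemma association_term_zero Gl f y s u k :
  ((1 <= f y)%nat -> (1 <= f s)%nat ->
     Gl (dec f s) = 0 /\ Gl (dec f y) = 0 /\ Gl (bind_exp f y s u) = 0) ->
  association_term Gl f y s u k = 0.
Proof.
  intros H. rewrite association_term_lead by (intros G1 G2; destruct (H G1 G2) as (? & ? & _); auto).
  apply if_leb2_zero. intros G1 G2. destruct (H G1 G2) as (_ & _ & ->). lra.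
Qed.

Lemma dissociation_term_zero Gl f y s u k :
  ((1 <= f u)%nat -> Gl (release_exp f u y) = 0 /\ Gl (release_exp f u s) = 0 /\ Gl f = 0) ->
  dissociation_term Gl f y s u k = 0.
Proof.
  intros H. rewrite dissociation_term_lead by (intros GU; destruct (H GU) as (? & _ & ?); auto).
  apply if_leb_zero. intros GU. destruct (H GU) as (_ & -> & _). lra.
Qed.

Lemma release_exp_cancel f u s : s <> u -> (1 <= f u)%nat -> inc (dec (release_exp f u s) s) u = f.
Proof.
  intros d H. extensionality t. unfold release_exp, inc, dec.
  destruct (Nat.eqb_spec t u), (Nat.eqb_spec t s); subst; try congruence; lia.
Qed.

Lemma bind_exp_cancel f y s u : y <> s -> y <> u -> s <> u -> (1 <= f y)%nat -> (1 <= f s)%nat ->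
  inc (inc (dec (bind_exp f y s u) u) y) s = f.
Proof.
  intros d1 d2 d3 H1 H2. extensionality t. unfold bind_exp, inc, dec.
  destruct (Nat.eqb_spec t u), (Nat.eqb_spec t s), (Nat.eqb_spec t y); subst; try congruence; lia.
Qed.

(** * A single chain *)

(* [ymon y q h] is the exponent of [x_y^q x_h]. *)
Definition ymon (y q h : nat) : nat -> nat :=
  fun t => if (t =? y)%nat then q else if (t =? h)%nat then 1%nat else 0%nat.
Definition zero_exp : nat -> nat := fun _ => 0%nat.

Lemma neq_at (g h : nat -> nat) x : g x <> h x -> g <> h.
Proof. intros H E; subst; auto. Qed.

Lemma INR_pred j : (1 <= j)%nat -> INR (j - 1) = INR j - 1.
Proof. intros. rewrite minus_INR by lia. simpl. lra. Qed.

(* The species of one component [Y + S_0 <-> U_1 -> Y + S_1 <-> ... <-> U_L -> Y + S_L]. *)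
Record chain (nS Y0 : nat) (Sp Up : nat -> nat) (L : nat) : Prop := {
  chain_len_pos : (1 <= L)%nat;
  chain_S_neq_Y : forall k, (k <= L)%nat -> Sp k <> Y0;
  chain_U_neq_Y : forall k, (1 <= k <= L)%nat -> Up k <> Y0;
  chain_S_neq_U : forall k k', (k <= L)%nat -> (1 <= k' <= L)%nat -> Sp k <> Up k';
  chain_S_inj : forall k k', (k <= L)%nat -> (k' <= L)%nat -> Sp k = Sp k' -> k = k';
  chain_U_inj : forall k k', (1 <= k <= L)%nat -> (1 <= k' <= L)%nat -> Up k = Up k' -> k = k';
  chain_Y_lt : (Y0 < nS)%nat;
  chain_S_lt : forall k, (k <= L)%nat -> (Sp k < nS)%nat;
  chain_U_lt : forall k, (1 <= k <= L)%nat -> (Up k < nS)%nat }.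

Arguments chain_len_pos {_ _ _ _ _}.
Arguments chain_S_neq_Y {_ _ _ _ _}.
Arguments chain_U_neq_Y {_ _ _ _ _}.
Arguments chain_S_neq_U {_ _ _ _ _}.
Arguments chain_S_inj {_ _ _ _ _}.
Arguments chain_U_inj {_ _ _ _ _}.
Arguments chain_Y_lt {_ _ _ _ _}.
Arguments chain_S_lt {_ _ _ _ _}.
Arguments chain_U_lt {_ _ _ _ _}.

Section Chain.

Variables (nS Y0 : nat) (Sp Up : nat -> nat) (L : nat).

Definition is_local t : Prop :=
  t = Y0 \/ (exists k, (k <= L)%nat /\ t = Sp k) \/ (exists k, (1 <= k <= L)%nat /\ t = Up k).

Definition local (f : nat -> nat) : Prop := forall t, f t <> 0%nat -> is_local t.

Definition chain_step (a b c : nat -> R) (G : nat -> (nat -> nat) -> R) l f : R :=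
  sumR (seq 1 L) (fun j =>
      association_term (G l) f Y0 (Sp (j - 1)) (Up j) (a j)
    + dissociation_term (G l) f Y0 (Sp (j - 1)) (Up j) (b j)
    + dissociation_term (G l) f Y0 (Sp j) (Up j) (c j)).

(* What [G l f], the coefficient of [x^f] in the [l]-th derivative of [s_L], satisfies on
   exponents local to the chain. *)
Record chain_coefs (a b c : nat -> R) (G : nat -> (nat -> nat) -> R) : Prop := {
  coefs_succ : forall l f, local f -> G (S l) f = chain_step a b c G l f;
  coefs_init : G 0%nat (ymon Y0 0 (Sp L)) = 1;
  coefs_init_other : forall f, local f -> f <> ymon Y0 0 (Sp L) -> G 0%nat f = 0 }.

(* Weights [w(Y) = 0], [w(S_k) = -2k], [w(U_k) = 1 - 2k]: every binding and every forward
   release lowers the weight of an exponent by one, every backward release raises it by one. *)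
Definition species_weight t : R :=
  sumR (seq 0 (S L)) (fun k => if (Sp k =? t)%nat then -2 * INR k else 0)
  + sumR (seq 1 L) (fun k => if (Up k =? t)%nat then 1 - 2 * INR k else 0).

Definition weight (f : nat -> nat) : R := sumR (seq 0 nS) (fun t => species_weight t * INR (f t)).

Definition max_weight l : R := -2 * INR L + INR l.

Definition lead_exp l : nat -> nat :=
  if Nat.even l then ymon Y0 (Nat.div2 l) (Sp (L - Nat.div2 l))
  else ymon Y0 (Nat.div2 l) (Up (L - Nat.div2 l)).

Fixpoint lead_coef (a c : nat -> R) l : R :=
  match l with
  | O => 1
  | S l' => lead_coef a c l' *
             (if Nat.even l' then c (L - Nat.div2 l')%nat else a (L - Nat.div2 l')%nat)
  end.

Definition leading_terms (a c : nat -> R) G l : Prop :=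
  forall g, local g -> weight g = max_weight l ->
    (g = lead_exp l -> G l g = lead_coef a c l) /\ (g <> lead_exp l -> G l g = 0).

Lemma weight_inc f x : (x < nS)%nat -> weight (inc f x) = weight f + species_weight x.
Proof.
  intros Hx. unfold weight.
  rewrite (sumR_ext _ _ (fun t => species_weight t * INR (f t)
                                 + (if (t =? x)%nat then species_weight t else 0))).
  - rewrite sumR_plus. f_equal.
    rewrite (sumR_single _ _ x); [rewrite Nat.eqb_refl; auto|apply seq_NoDup|apply in_seq; lia|].
    intros t _ Hne. destruct (Nat.eqb_spec t x); congruence.
  - intros t _. unfold inc. destruct (Nat.eqb_spec t x); [subst; rewrite plus_INR; simpl|]; lra.
Qed.

Lemma weight_dec f x :
  (x < nS)%nat -> (1 <= f x)%nat -> weight (dec f x) = weight f - species_weight x.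
Proof.
  intros Hx Hf. unfold weight.
  rewrite (sumR_ext _ _ (fun t => species_weight t * INR (f t)
                                 + (if (t =? x)%nat then - species_weight t else 0))).
  - rewrite sumR_plus.
    rewrite (sumR_single _ (fun t => if (t =? x)%nat then - species_weight t else 0) x);
      [rewrite Nat.eqb_refl; lra|apply seq_NoDup|apply in_seq; lia|].
    intros t _ Hne. destruct (Nat.eqb_spec t x); congruence.
  - intros t _. unfold dec.
    destruct (Nat.eqb_spec t x); [subst; rewrite minus_INR by lia; simpl|]; lra.
Qed.

Lemma local_dec f x : local f -> local (dec f x).
Proof. intros H t Ht. apply H. unfold dec in Ht. destruct (t =? x)%nat; lia. Qed.

Lemma local_inc f x : local f -> is_local x -> local (inc f x).
Proof.
  intros H Hx t Ht. unfold inc in Ht.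
  destruct (Nat.eqb_spec t x); [subst; auto|]. apply H; auto.
Qed.

Lemma local_ymon q h : is_local h -> local (ymon Y0 q h).
Proof.
  intros Hh t Ht. unfold ymon in Ht. destruct (Nat.eqb_spec t Y0); [left; auto|].
  destruct (Nat.eqb_spec t h); [subst; auto|]. lia.
Qed.

Lemma local_zero : local zero_exp.
Proof. intros t Ht; unfold zero_exp in Ht; lia. Qed.

Lemma is_local_Y : is_local Y0.
Proof. left; auto. Qed.

Lemma is_local_S k : (k <= L)%nat -> is_local (Sp k).
Proof. intros; right; left; eauto. Qed.

Lemma is_local_U k : (1 <= k <= L)%nat -> is_local (Up k).
Proof. intros; right; right; eauto. Qed.

Lemma local_bind f j : (1 <= j <= L)%nat -> local f -> local (bind_exp f Y0 (Sp (j - 1)) (Up j)).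
Proof. intros Hj Hf. apply local_inc; [apply local_dec, local_dec; auto|apply is_local_U; lia]. Qed.

Lemma local_release f u x : local f -> is_local x -> local (release_exp f u x).
Proof. intros Hf Hx. apply local_inc; [apply local_dec|]; auto. Qed.

Hypothesis Hch : chain nS Y0 Sp Up L.

Ltac chain_inj := match goal with
  | e : Sp ?k = Sp ?k' |- _ => apply (chain_S_inj Hch k k') in e; lia
  | e : Up ?k = Up ?k' |- _ => apply (chain_U_inj Hch k k') in e; lia end.

Ltac chain_contra :=
  exfalso; first
  [ eapply (chain_S_neq_Y Hch); [|eassumption]; lia
  | eapply (chain_S_neq_Y Hch); [|symmetry; eassumption]; lia
  | eapply (chain_U_neq_Y Hch); [|eassumption]; lia
  | eapply (chain_U_neq_Y Hch); [|symmetry; eassumption]; lia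
  | eapply (chain_S_neq_U Hch); [| |eassumption]; lia
  | eapply (chain_S_neq_U Hch); [| |symmetry; eassumption]; lia
  | chain_inj ].

Ltac exp_cases := unfold bind_exp, release_exp, inc, dec, ymon, zero_exp;
  repeat match goal with |- context [Nat.eqb ?x ?y] =>
    destruct (Nat.eqb_spec x y); try chain_contra end;
  try congruence; try lia.

Ltac exp_cases_in E := unfold bind_exp, release_exp, inc, dec, ymon, zero_exp in E;
  repeat match type of E with context [Nat.eqb ?x ?y] =>
    destruct (Nat.eqb_spec x y); try chain_contra end;
  try congruence; try lia; try chain_inj.

Ltac exp_ext := let t := fresh "t" in extensionality t;
  unfold bind_exp, release_exp, inc, dec, ymon, zero_exp;
  repeat match goal with |- context [Nat.eqb ?x ?y] =>
    destruct (Nat.eqb_spec x y); try subst t; try chain_contra end;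
  try congruence; try lia.

Hint Resolve local_bind local_release local_ymon local_zero local_inc local_dec
  is_local_Y is_local_S is_local_U : chain_local.
Hint Extern 5 (local (bind_exp _ _ _ _)) => unfold bind_exp : chain_local.
Hint Extern 4 (_ <= _)%nat => lia : chain_local.
Hint Extern 4 (_ <= _ <= _)%nat => lia : chain_local.

Ltac solve_local := solve [eauto 8 with chain_local].

Lemma species_weight_S k : (k <= L)%nat -> species_weight (Sp k) = -2 * INR k.
Proof.
  intros Hk. unfold species_weight.
  rewrite (sumR_single _ _ k); [|apply seq_NoDup|apply in_seq; lia|].
  - rewrite Nat.eqb_refl, sumR_zero; [lra|]. intros k' Hk'. apply in_seq in Hk'.
    destruct (Nat.eqb_spec (Up k') (Sp k)); auto. chain_contra.
  - intros k' Hk' Hne. apply in_seq in Hk'.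
    destruct (Nat.eqb_spec (Sp k') (Sp k)); auto. chain_contra.
Qed.

Lemma species_weight_U k : (1 <= k <= L)%nat -> species_weight (Up k) = 1 - 2 * INR k.
Proof.
  intros Hk. unfold species_weight.
  rewrite (sumR_single (seq 1 L) _ k); [|apply seq_NoDup|apply in_seq; lia|].
  - rewrite Nat.eqb_refl, sumR_zero; [lra|]. intros k' Hk'. apply in_seq in Hk'.
    destruct (Nat.eqb_spec (Sp k') (Up k)); auto. chain_contra.
  - intros k' Hk' Hne. apply in_seq in Hk'.
    destruct (Nat.eqb_spec (Up k') (Up k)); auto. chain_contra.
Qed.

Lemma species_weight_Y : species_weight Y0 = 0.
Proof.
  unfold species_weight. rewrite !sumR_zero; [lra| |]; intros k' Hk'; apply in_seq in Hk'.
  - destruct (Nat.eqb_spec (Up k') Y0); auto. chain_contra.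
  - destruct (Nat.eqb_spec (Sp k') Y0); auto. chain_contra.
Qed.

Lemma weight_ymon q h : (h < nS)%nat -> h <> Y0 -> weight (ymon Y0 q h) = species_weight h.
Proof.
  intros Hh Hne. unfold weight.
  rewrite (sumR_single _ _ h); [|apply seq_NoDup|apply in_seq; lia|].
  - unfold ymon. rewrite Nat.eqb_refl. destruct (Nat.eqb_spec h Y0); [congruence|]. simpl. lra.
  - intros t _ Ht. unfold ymon. destruct (Nat.eqb_spec t Y0).
    + subst. rewrite species_weight_Y. lra.
    + destruct (Nat.eqb_spec t h); [congruence|]. simpl; lra.
Qed.

Lemma local_vanishes_from f : local f -> vanishes_from nS f.
Proof.
  intros Hp t Ht. destruct (Nat.eq_dec (f t) 0) as [|Hne]; auto. exfalso.
  destruct (Hp t Hne) as [->|[[k [Hk ->]]|[k [Hk ->]]]].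
  - pose proof (chain_Y_lt Hch). lia.
  - pose proof (chain_S_lt Hch k Hk). lia.
  - pose proof (chain_U_lt Hch k Hk). lia.
Qed.

Lemma weight_bind f j : (1 <= j <= L)%nat -> (1 <= f Y0)%nat -> (1 <= f (Sp (j - 1)))%nat ->
  weight (bind_exp f Y0 (Sp (j - 1)) (Up j)) = weight f - 1.
Proof.
  intros Hj G1 G2. unfold bind_exp.
  rewrite weight_inc, weight_dec, weight_dec by (first [apply (chain_Y_lt Hch)
    | apply (chain_S_lt Hch); lia | apply (chain_U_lt Hch); lia | exp_cases]).
  rewrite species_weight_Y, species_weight_S, species_weight_U, INR_pred by lia. lra.
Qed.

Lemma weight_release f j x : (1 <= j <= L)%nat -> (x < nS)%nat -> (1 <= f (Up j))%nat ->
  weight (release_exp f (Up j) x) = weight f - (1 - 2 * INR j) + species_weight x.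
Proof.
  intros Hj Hx GU. unfold release_exp.
  rewrite weight_inc, weight_dec, species_weight_U by (auto; apply (chain_U_lt Hch); lia). lra.
Qed.

Lemma weight_release_fwd f j : (1 <= j <= L)%nat -> (1 <= f (Up j))%nat ->
  weight (release_exp f (Up j) (Sp j)) = weight f - 1.
Proof.
  intros Hj GU.
  rewrite weight_release by (first [lia | apply (chain_S_lt Hch); lia | assumption]).
  rewrite species_weight_S by lia. lra.
Qed.

Lemma lead_exp_even q : lead_exp (2 * q) = ymon Y0 q (Sp (L - q)).
Proof. unfold lead_exp. rewrite Nat.even_even, Nat.div2_double. reflexivity. Qed.

Lemma lead_exp_odd q : lead_exp (S (2 * q)) = ymon Y0 q (Up (L - q)).
Proof.
  unfold lead_exp. replace (S (2 * q)) with (2 * q + 1)%nat by lia.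
  rewrite Nat.even_odd. replace (2 * q + 1)%nat with (S (2 * q)) by lia.
  rewrite Nat.div2_succ_double. reflexivity.
Qed.

Lemma lead_coef_S a c l : lead_coef a c (S l) =
  lead_coef a c l * (if Nat.even l then c (L - Nat.div2 l)%nat else a (L - Nat.div2 l)%nat).
Proof. reflexivity. Qed.

Lemma lead_coef_even a c q : lead_coef a c (S (2 * q)) = lead_coef a c (2 * q) * c (L - q)%nat.
Proof. rewrite lead_coef_S, Nat.even_even, Nat.div2_double. reflexivity. Qed.

Lemma lead_coef_odd a c q :
  lead_coef a c (S (S (2 * q))) = lead_coef a c (S (2 * q)) * a (L - q)%nat.
Proof.
  rewrite lead_coef_S. replace (S (2 * q)) with (2 * q + 1)%nat by lia.
  rewrite Nat.even_odd. replace (2 * q + 1)%nat with (S (2 * q)) by lia.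
  rewrite Nat.div2_succ_double. reflexivity.
Qed.

Lemma lead_coef_pos a c m : (forall j, (1 <= j <= L)%nat -> 0 < a j /\ 0 < c j) ->
  (m <= 2 * L)%nat -> 0 < lead_coef a c m.
Proof.
  intros Hpos. induction m; intros Hm; simpl; [lra|].
  apply Rmult_lt_0_compat; [apply IHm; lia|].
  destruct (Nat.Even_or_Odd m) as [[q ->]|[q ->]].
  - rewrite Nat.even_even, Nat.div2_double. apply Hpos; lia.
  - rewrite Nat.even_odd. replace (2 * q + 1)%nat with (S (2 * q)) by lia.
    rewrite Nat.div2_succ_double. apply Hpos; lia.
Qed.

Lemma local_lead_exp_even q : (q <= L)%nat -> local (lead_exp (2 * q)).
Proof. intros. rewrite lead_exp_even. apply local_ymon, is_local_S; lia. Qed.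

Lemma local_lead_exp_odd q : (q < L)%nat -> local (lead_exp (S (2 * q))).
Proof. intros. rewrite lead_exp_odd. apply local_ymon, is_local_U; lia. Qed.

Lemma weight_lead_exp_even q : (q <= L)%nat -> weight (lead_exp (2 * q)) = max_weight (2 * q).
Proof.
  intros Hq. rewrite lead_exp_even, weight_ymon, species_weight_S
    by (first [lia | apply (chain_S_lt Hch); lia | apply (chain_S_neq_Y Hch); lia]).
  unfold max_weight. rewrite minus_INR, mult_INR by lia. simpl. lra.
Qed.

Lemma weight_lead_exp_odd q : (q < L)%nat -> weight (lead_exp (S (2 * q))) = max_weight (S (2 * q)).
Proof.
  intros Hq. rewrite lead_exp_odd, weight_ymon, species_weight_U
    by (first [lia | apply (chain_U_lt Hch); lia | apply (chain_U_neq_Y Hch); lia]).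
  unfold max_weight. rewrite minus_INR, S_INR, mult_INR by lia. simpl. lra.
Qed.

(* The only exponents from which the leading exponent of the next order is reached. *)
Lemma release_fwd_eq_ymon f j q k : (1 <= j <= L)%nat -> (k <= L)%nat -> (1 <= f (Up j))%nat ->
  release_exp f (Up j) (Sp j) = ymon Y0 q (Sp k) -> j = k /\ f = ymon Y0 q (Up k).
Proof.
  intros Hj Hk GU E.
  assert (Hjk : j = k).
  { apply (f_equal (fun g => g (Sp j))) in E. exp_cases_in E. }
  subst k. split; [reflexivity|].
  rewrite <- (release_exp_cancel f (Up j) (Sp j)), E by (auto; apply (chain_S_neq_U Hch); lia).
  exp_ext.
Qed.

Lemma bind_eq_ymon f j q k : (1 <= j <= L)%nat -> (1 <= k <= L)%nat ->
  (1 <= f Y0)%nat -> (1 <= f (Sp (j - 1)))%nat ->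
  bind_exp f Y0 (Sp (j - 1)) (Up j) = ymon Y0 q (Up k) -> j = k /\ f = ymon Y0 (S q) (Sp (k - 1)).
Proof.
  intros Hj Hk G1 G2 E.
  assert (Hjk : j = k).
  { apply (f_equal (fun g => g (Up j))) in E. exp_cases_in E. }
  subst k. split; [reflexivity|].
  rewrite <- (bind_exp_cancel f Y0 (Sp (j - 1)) (Up j)), E
    by (auto; first [apply not_eq_sym, (chain_S_neq_Y Hch) | apply not_eq_sym, (chain_U_neq_Y Hch)
                     | apply (chain_S_neq_U Hch)]; lia).
  exp_ext.
Qed.

Lemma bind_neq_ymon f j q k : (1 <= j <= L)%nat -> (k <= L)%nat ->
  bind_exp f Y0 (Sp (j - 1)) (Up j) <> ymon Y0 q (Sp k).
Proof. intros Hj Hk. apply (neq_at _ _ (Up j)). exp_cases. Qed.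

Lemma release_fwd_neq_ymon f j q k : (1 <= j <= L)%nat -> (1 <= k <= L)%nat ->
  release_exp f (Up j) (Sp j) <> ymon Y0 q (Up k).
Proof. intros Hj Hk. apply (neq_at _ _ (Sp j)). exp_cases. Qed.

Section Coefficients.

Variables (a b c : nat -> R) (G : nat -> (nat -> nat) -> R).
Hypothesis HG : chain_coefs a b c G.

(* At the top weight only the steps lowering the weight survive. *)
Lemma chain_step_lead l f : local f ->
  (forall g, local g -> weight g >= weight f -> G l g = 0) ->
  G (S l) f = sumR (seq 1 L) (fun j =>
      (if andb (1 <=? f Y0)%nat (1 <=? f (Sp (j - 1)))%nat
       then a j * INR (f (Up j) + 1) * G l (bind_exp f Y0 (Sp (j - 1)) (Up j)) else 0)
    + (if (1 <=? f (Up j))%nat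
       then c j * INR (f (Sp j) + 1) * G l (release_exp f (Up j) (Sp j)) else 0)).
Proof.
  intros Hf V. rewrite (coefs_succ _ _ _ _ HG) by assumption. unfold chain_step.
  apply sumR_ext. intros j Hj. apply in_seq in Hj.
  assert (nY := chain_Y_lt Hch).
  assert (nS1 : (Sp (j - 1) < nS)%nat) by (apply (chain_S_lt Hch); lia).
  assert (nU : (Up j < nS)%nat) by (apply (chain_U_lt Hch); lia).
  assert (wS1 := species_weight_S (j - 1) ltac:(lia)).
  assert (wY := species_weight_Y). assert (Ij := INR_pred j ltac:(lia)).
  assert (Ij0 := pos_INR (j - 1)).
  assert (Z_f : G l f = 0) by (apply V; auto; lra).
  assert (Z_dec : forall x, (x = Y0 \/ x = Sp (j - 1)) -> (1 <= f x)%nat -> G l (dec f x) = 0).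
  { intros x Hx Gx. apply V; [apply local_dec; auto|].
    destruct Hx as [->| ->]; rewrite weight_dec by auto; lra. }
  assert (Z_rel : forall x, (x = Y0 \/ x = Sp (j - 1)) -> (1 <= f (Up j))%nat ->
                  G l (release_exp f (Up j) x) = 0).
  { intros x Hx GU. apply V.
    - apply local_release; auto. destruct Hx as [->| ->]; [apply is_local_Y|apply is_local_S; lia].
    - destruct Hx as [->| ->]; rewrite weight_release by (auto; lia); lra. }
  rewrite association_term_lead by (intros; split; apply Z_dec; auto).
  rewrite (dissociation_term_zero (G l) f Y0 (Sp (j - 1)) (Up j)) by (intros; repeat split; auto).
  rewrite dissociation_term_lead by (intros; split; auto).
  lra.
Qed.

Lemma coef_vanish_step l :
  (forall f, local f -> weight f > max_weight l -> G l f = 0) ->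
  forall f, local f -> weight f > max_weight (S l) -> G (S l) f = 0.
Proof.
  intros V f Hf HW. unfold max_weight in *. rewrite S_INR in HW.
  rewrite chain_step_lead by (auto; intros g Hg Hgw; apply V; auto; lra).
  apply sumR_zero. intros j Hj. apply in_seq in Hj.
  rewrite if_leb2_zero, if_leb_zero; [lra| |]; intros.
  - rewrite (V (release_exp _ _ _)) by first
      [apply local_release, is_local_S; auto; lia | rewrite weight_release_fwd by (auto; lia); lra].
    lra.
  - rewrite (V (bind_exp _ _ _ _))
      by first [apply local_bind; auto; lia | rewrite weight_bind by (auto; lia); lra].
    lra.
Qed.

Lemma leading_terms_even q : (q < L)%nat ->
  (forall f, local f -> weight f > max_weight (2 * q) -> G (2 * q) f = 0) ->
  leading_terms a c G (2 * q) -> leading_terms a c G (S (2 * q)).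
Proof.
  intros Hq V T f Hf HW. rewrite lead_exp_odd, lead_coef_even.
  set (k := (L - q)%nat). assert (Hk : (1 <= k <= L)%nat) by (unfold k; lia).
  unfold max_weight in HW. rewrite S_INR in HW.
  rewrite chain_step_lead by (auto; intros g Hg Hgw; apply V; unfold max_weight; auto; lra).
  assert (Tat : forall g, local g -> weight g = weight f - 1 -> g <> ymon Y0 q (Sp k) ->
                G (2 * q) g = 0).
  { intros g Hg Hgw Hne. apply (T g Hg); [unfold max_weight; lra|].
    rewrite lead_exp_even. fold k. exact Hne. }
  rewrite (sumR_ext _ _ (fun j => if (1 <=? f (Up j))%nat
      then c j * INR (f (Sp j) + 1) * G (2 * q) (release_exp f (Up j) (Sp j)) else 0)).
  2:{ intros j Hj. apply in_seq in Hj. rewrite if_leb2_zero; [lra|]. intros G1 G2.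
      rewrite Tat; [lra|apply local_bind; auto; lia|apply weight_bind; auto; lia|].
      apply bind_neq_ymon; lia. }
  split.
  - intros ->. rewrite (sumR_single _ _ k); [|apply seq_NoDup|apply in_seq; lia|].
    + assert (Erel : release_exp (ymon Y0 q (Up k)) (Up k) (Sp k) = lead_exp (2 * q))
        by (rewrite lead_exp_even; fold k; exp_ext).
      rewrite Erel, (proj1 (T _ (local_lead_exp_even q ltac:(lia))
                               (weight_lead_exp_even q ltac:(lia))) eq_refl).
      replace (ymon Y0 q (Up k) (Up k)) with 1%nat by exp_cases.
      replace (ymon Y0 q (Up k) (Sp k)) with 0%nat by exp_cases.
      simpl. lra.
    + intros j Hj Hne. apply in_seq in Hj.
      replace (ymon Y0 q (Up k) (Up j)) with 0%nat by exp_cases. reflexivity.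
  - intros Hne. apply sumR_zero. intros j Hj. apply in_seq in Hj.
    apply if_leb_zero. intros GU.
    rewrite Tat; [lra|apply local_release, is_local_S; auto; lia|
                  apply weight_release_fwd; auto; lia|].
    intros E. apply Hne. apply (release_fwd_eq_ymon f j q k); auto; lia.
Qed.

Lemma leading_terms_odd q : (q < L)%nat ->
  (forall f, local f -> weight f > max_weight (S (2 * q)) -> G (S (2 * q)) f = 0) ->
  leading_terms a c G (S (2 * q)) -> leading_terms a c G (S (S (2 * q))).
Proof.
  intros Hq V T f Hf HW. rewrite lead_coef_odd.
  replace (lead_exp (S (S (2 * q)))) with (lead_exp (2 * S q)) by (f_equal; lia).
  rewrite lead_exp_even. replace (L - S q)%nat with (L - q - 1)%nat by lia.
  set (k := (L - q)%nat). assert (Hk : (1 <= k <= L)%nat) by (unfold k; lia).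
  unfold max_weight in HW. rewrite !S_INR in HW.
  rewrite chain_step_lead by (auto; intros g Hg Hgw; apply V; auto; unfold max_weight; rewrite S_INR; lra).
  assert (Tat : forall g, local g -> weight g = weight f - 1 -> g <> ymon Y0 q (Up k) ->
                G (S (2 * q)) g = 0).
  { intros g Hg Hgw Hne. apply (T g Hg); [unfold max_weight; rewrite S_INR; lra|].
    rewrite lead_exp_odd. fold k. exact Hne. }
  rewrite (sumR_ext _ _ (fun j => if andb (1 <=? f Y0)%nat (1 <=? f (Sp (j - 1)))%nat
      then a j * INR (f (Up j) + 1) * G (S (2 * q)) (bind_exp f Y0 (Sp (j - 1)) (Up j)) else 0)).
  2:{ intros j Hj. apply in_seq in Hj. rewrite (if_leb_zero (f (Up j))); [lra|]. intros GU.
      rewrite Tat; [lra|apply local_release, is_local_S; auto; lia|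
                    apply weight_release_fwd; auto; lia|].
      apply release_fwd_neq_ymon; lia. }
  split.
  - intros ->. rewrite (sumR_single _ _ k); [|apply seq_NoDup|apply in_seq; lia|].
    + assert (Ebind : bind_exp (ymon Y0 (S q) (Sp (k - 1))) Y0 (Sp (k - 1)) (Up k)
                      = lead_exp (S (2 * q))) by (rewrite lead_exp_odd; fold k; exp_ext).
      rewrite Ebind, (proj1 (T _ (local_lead_exp_odd q ltac:(lia))
                               (weight_lead_exp_odd q ltac:(lia))) eq_refl).
      replace (ymon Y0 (S q) (Sp (k - 1)) Y0) with (S q) by exp_cases.
      replace (ymon Y0 (S q) (Sp (k - 1)) (Sp (k - 1))) with 1%nat by exp_cases.
      replace (ymon Y0 (S q) (Sp (k - 1)) (Up k)) with 0%nat by exp_cases.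
      simpl. lra.
    + intros j Hj Hne. apply in_seq in Hj.
      replace (ymon Y0 (S q) (Sp (k - 1)) (Sp (j - 1))) with 0%nat by exp_cases.
      rewrite Bool.andb_false_r. reflexivity.
  - intros Hne. apply sumR_zero. intros j Hj. apply in_seq in Hj.
    apply if_leb2_zero. intros G1 G2.
    rewrite Tat; [lra|apply local_bind; auto; lia|apply weight_bind; auto; lia|].
    intros E. apply Hne. apply (bind_eq_ymon f j q k); auto; lia.
Qed.

Lemma coef_weight_bound_and_lead l :
  (forall f, local f -> weight f > max_weight l -> G l f = 0) /\
  ((l <= 2 * L)%nat -> leading_terms a c G l).
Proof.
  assert (E0 : lead_exp 0 = ymon Y0 0 (Sp L))
    by (unfold lead_exp; simpl; rewrite Nat.sub_0_r; reflexivity).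
  assert (W0 := weight_lead_exp_even 0 ltac:(lia)). simpl (2 * 0)%nat in W0. rewrite E0 in W0.
  induction l as [|l [IHV IHT]].
  - split.
    + intros f Hf HW. apply (coefs_init_other _ _ _ _ HG); auto. intros ->. lra.
    + intros _ f Hf HW. rewrite E0. simpl lead_coef.
      split; [intros ->; apply (coefs_init _ _ _ _ HG)|apply (coefs_init_other _ _ _ _ HG); auto].
  - split; [apply coef_vanish_step; auto|].
    intros Hl. destruct (Nat.Even_or_Odd l) as [[q ->]|[q ->]].
    + apply leading_terms_even; auto; [lia|apply IHT; lia].
    + rewrite Nat.add_1_r in *. apply leading_terms_odd; auto; [lia|apply IHT; lia].
Qed.

Lemma coef_lead_exp_even q : (q <= L)%nat -> G (2 * q) (lead_exp (2 * q)) = lead_coef a c (2 * q).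
Proof.
  intros Hq. apply (proj2 (coef_weight_bound_and_lead (2 * q)) ltac:(lia));
    [apply local_lead_exp_even|apply weight_lead_exp_even|]; auto.
Qed.

Lemma coef_lead_exp_odd q : (q < L)%nat ->
  G (S (2 * q)) (lead_exp (S (2 * q))) = lead_coef a c (S (2 * q)).
Proof.
  intros Hq. apply (proj2 (coef_weight_bound_and_lead (S (2 * q))) ltac:(lia));
    [apply local_lead_exp_odd|apply weight_lead_exp_odd|]; auto.
Qed.

Lemma chain_step_zero l f :
  (forall j, (1 <= j <= L)%nat -> (1 <= f Y0)%nat -> (1 <= f (Sp (j - 1)))%nat ->
     G l (dec f (Sp (j - 1))) = 0 /\ G l (dec f Y0) = 0 /\
     G l (bind_exp f Y0 (Sp (j - 1)) (Up j)) = 0) ->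
  (forall j, (1 <= j <= L)%nat -> (1 <= f (Up j))%nat ->
     G l (release_exp f (Up j) Y0) = 0 /\ G l (release_exp f (Up j) (Sp (j - 1))) = 0 /\
     G l (release_exp f (Up j) (Sp j)) = 0 /\ G l f = 0) ->
  chain_step a b c G l f = 0.
Proof.
  intros HA HD. apply sumR_zero. intros j Hj. apply in_seq in Hj.
  rewrite association_term_zero, !dissociation_term_zero; [lra| | |];
    intros; try (apply HA; auto; lia); destruct (HD j ltac:(lia)) as (? & ? & ? & ?); auto.
Qed.

Lemma coef_order1 f : local f ->
  (f = ymon Y0 0 (Up L) -> G 1 f = c L) /\ (f <> ymon Y0 0 (Up L) -> G 1 f = 0).
Proof.
  intros Hf. assert (HL := chain_len_pos Hch). split.
  - intros ->. assert (E := coef_lead_exp_odd 0 ltac:(lia)).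
    rewrite lead_exp_odd, Nat.sub_0_r in E. change (S (2 * 0)) with 1%nat in E.
    rewrite E. simpl. rewrite Nat.sub_0_r. lra.
  - intros Hne. rewrite (coefs_succ _ _ _ _ HG) by assumption.
    assert (Z : forall g, local g -> g <> ymon Y0 0 (Sp L) -> G 0 g = 0)
      by apply (coefs_init_other _ _ _ _ HG).
    apply chain_step_zero.
    + intros j Hj G1 G2. repeat split; apply Z; try solve_local.
      * apply (neq_at _ _ Y0); exp_cases.
      * apply (neq_at _ _ (Sp (j - 1))); exp_cases.
      * apply bind_neq_ymon; lia.
    + intros j Hj GU. repeat split; apply Z; try solve_local.
      * apply (neq_at _ _ Y0); exp_cases.
      * apply (neq_at _ _ (Sp (j - 1))); exp_cases.
      * intros E. apply Hne. apply (release_fwd_eq_ymon f j 0 L) in E; try lia. apply E.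
      * apply (neq_at _ _ (Up j)); exp_cases.
Qed.

Lemma coef_order2_lead : G 2 (ymon Y0 1 (Sp (L - 1))) = a L * c L.
Proof.
  assert (HL := chain_len_pos Hch). assert (E := coef_lead_exp_even 1 ltac:(lia)).
  rewrite lead_exp_even in E. change (2 * 1)%nat with 2%nat in E.
  rewrite E. simpl. rewrite Nat.sub_0_r. lra.
Qed.

Lemma coef_order2_U : G 2 (ymon Y0 0 (Up L)) = - (b L + c L) * c L.
Proof.
  assert (HL := chain_len_pos Hch).
  assert (G1 := coef_order1). assert (Hf : local (ymon Y0 0 (Up L))) by solve_local.
  rewrite (coefs_succ _ _ _ _ HG) by assumption. unfold chain_step.
  rewrite (sumR_single _ _ L); [|apply seq_NoDup|apply in_seq; lia|].
  - unfold association_term, dissociation_term.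
    replace (ymon Y0 0 (Up L) Y0) with 0%nat by exp_cases.
    replace (ymon Y0 0 (Up L) (Up L)) with 1%nat by exp_cases.
    assert (Zrel : forall x, is_local x -> x <> Up L ->
                   G 1 (release_exp (ymon Y0 0 (Up L)) (Up L) x) = 0).
    { intros x Hx Hne. apply G1; [solve_local|apply (neq_at _ _ (Up L)); exp_cases]. }
    rewrite (proj1 (G1 _ Hf)), !Zrel by first
      [reflexivity | solve_local | apply (chain_S_neq_U Hch); lia
       | apply not_eq_sym, (chain_U_neq_Y Hch); lia].
    simpl. lra.
  - intros j Hj Hne. apply in_seq in Hj. unfold association_term, dissociation_term.
    replace (ymon Y0 0 (Up L) Y0) with 0%nat by exp_cases.
    replace (ymon Y0 0 (Up L) (Up j)) with 0%nat by exp_cases.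
    simpl. lra.
Qed.

Lemma coef_order2_zero f : local f ->
  f <> ymon Y0 1 (Sp (L - 1)) -> f <> ymon Y0 0 (Up L) -> G 2 f = 0.
Proof.
  intros Hf Hn1 Hn2. assert (HL := chain_len_pos Hch).
  assert (Z : forall g, local g -> g <> ymon Y0 0 (Up L) -> G 1 g = 0)
    by (intros g Hg; apply (coef_order1 g Hg)).
  rewrite (coefs_succ _ _ _ _ HG) by assumption. apply chain_step_zero.
  - intros j Hj G1 G2. repeat split; apply Z; try solve_local.
    + apply (neq_at _ _ Y0); exp_cases.
    + apply (neq_at _ _ (Sp (j - 1))); exp_cases.
    + intros E. apply Hn1. apply (bind_eq_ymon f j 0 L) in E; try lia. apply E.
  - intros j Hj GU. repeat split; apply Z; try solve_local.
    + apply (neq_at _ _ Y0); exp_cases.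
    + apply (neq_at _ _ (Sp (j - 1))); exp_cases.
    + apply release_fwd_neq_ymon; lia.
Qed.

Lemma coef_order2_zero_at f x y : local f ->
  f x <> ymon Y0 1 (Sp (L - 1)) x -> f y <> ymon Y0 0 (Up L) y -> G 2 f = 0.
Proof. intros Hf Hx Hy. apply coef_order2_zero; auto; eapply neq_at; eauto. Qed.

Lemma coef_order3_release j : (2 <= L)%nat -> (1 <= j <= L)%nat ->
  G 3 (inc (inc zero_exp (Up j)) (Sp (L - 1))) = (b j + c j) * (a L * c L).
Proof.
  intros HL Hj. set (f := inc (inc zero_exp (Up j)) (Sp (L - 1))).
  assert (Hf : local f) by (unfold f; solve_local).
  rewrite (coefs_succ _ _ _ _ HG) by assumption. unfold chain_step.
  rewrite (sumR_single _ _ j); [|apply seq_NoDup|apply in_seq; lia|].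
  - unfold association_term, dissociation_term.
    replace (f Y0) with 0%nat by (unfold f; exp_cases).
    replace (f (Up j)) with 1%nat by (unfold f; exp_cases).
    replace (release_exp f (Up j) Y0) with (ymon Y0 1 (Sp (L - 1))) by (unfold f; exp_ext).
    rewrite coef_order2_lead. simpl Nat.leb. simpl andb. cbv iota.
    rewrite !(coef_order2_zero_at _ Y0 (Sp (L - 1))) by (solve_local || (unfold f; exp_cases)).
    simpl. lra.
  - intros k Hk Hne. apply in_seq in Hk. unfold association_term, dissociation_term.
    replace (f Y0) with 0%nat by (unfold f; exp_cases).
    replace (f (Up k)) with 0%nat by (unfold f; exp_cases).
    simpl. lra.
Qed.

Lemma coef_order3_bind : (2 <= L)%nat ->
  G 3 (inc (inc (inc zero_exp Y0) (Sp (L - 1))) (Sp 0)) = - a 1%nat * (a L * c L).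
Proof.
  intros HL. set (f := inc (inc (inc zero_exp Y0) (Sp (L - 1))) (Sp 0)).
  assert (Hf : local f) by (unfold f; solve_local).
  rewrite (coefs_succ _ _ _ _ HG) by assumption. unfold chain_step.
  assert (EU : forall k, (1 <= k <= L)%nat -> f (Up k) = 0%nat) by (intros; unfold f; exp_cases).
  assert (EY : f Y0 = 1%nat) by (unfold f; exp_cases).
  rewrite (sumR_single _ _ 1%nat); [|apply seq_NoDup|apply in_seq; lia|].
  - unfold association_term, dissociation_term. rewrite EU, EY by lia.
    change (1 - 1)%nat with 0%nat.
    replace (f (Sp 0)) with 1%nat by (unfold f; exp_cases).
    replace (dec f (Sp 0)) with (ymon Y0 1 (Sp (L - 1))) by (unfold f; exp_ext).
    rewrite coef_order2_lead.
    rewrite (coef_order2_zero_at (dec f Y0) Y0 (Sp 0)) by (solve_local || (unfold f; exp_cases)).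
    rewrite (coef_order2_zero_at (bind_exp _ _ _ _) Y0 (Sp (L - 1)))
      by (solve_local || (unfold f; exp_cases)).
    simpl. lra.
  - intros k Hk Hne. apply in_seq in Hk. unfold association_term, dissociation_term.
    rewrite EU, EY by lia. simpl (1 <=? 0)%nat. simpl (1 <=? 1)%nat.
    destruct (Nat.leb_spec 1 (f (Sp (k - 1)))) as [G2|]; simpl; [|lra].
    assert (Hk' : k = L) by (unfold f in G2; exp_cases_in G2).
    subst k.
    rewrite (coef_order2_zero_at (dec f (Sp (L - 1))) (Sp (L - 1)) Y0)
      by (solve_local || (unfold f; exp_cases)).
    rewrite (coef_order2_zero_at (dec f Y0) Y0 (Sp 0)) by (solve_local || (unfold f; exp_cases)).
    rewrite (coef_order2_zero_at (bind_exp _ _ _ _) Y0 (Sp 0))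
      by (solve_local || (unfold f; exp_cases)).
    lra.
Qed.

End Coefficients.

Section Identifiability.

Variables (a b c a' b' c' : nat -> R) (G G' : nat -> (nat -> nat) -> R).
Hypothesis HG : chain_coefs a b c G.
Hypothesis HG' : chain_coefs a' b' c' G'.
Hypothesis Hpos' : forall j, (1 <= j <= L)%nat -> 0 < a' j /\ 0 < b' j /\ 0 < c' j.
Hypothesis Heq : forall l f, (1 <= l <= Nat.max 2 (2 * L - 1))%nat -> local f -> G l f = G' l f.

Lemma lead_coef_agree m : (m <= 2 * L - 1)%nat -> lead_coef a c m = lead_coef a' c' m.
Proof.
  intros Hm. destruct (Nat.Even_or_Odd m) as [[[|q] ->]|[q ->]]; [reflexivity| |].
  - rewrite <- (coef_lead_exp_even _ _ _ _ HG), <- (coef_lead_exp_even _ _ _ _ HG') by lia.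
    apply Heq; [lia|apply local_lead_exp_even; lia].
  - rewrite Nat.add_1_r, <- (coef_lead_exp_odd _ _ _ _ HG), <- (coef_lead_exp_odd _ _ _ _ HG')
      by lia.
    apply Heq; [lia|apply local_lead_exp_odd; lia].
Qed.

Lemma lead_coef_pos' m : (m <= 2 * L)%nat -> 0 < lead_coef a' c' m.
Proof. apply lead_coef_pos. intros j Hj. destruct (Hpos' j Hj) as (? & _ & ?). auto. Qed.

Lemma c_agree j : (1 <= j <= L)%nat -> c j = c' j.
Proof.
  intros Hj. assert (E := lead_coef_even a c (L - j)). assert (E' := lead_coef_even a' c' (L - j)).
  replace (L - (L - j))%nat with j in E, E' by lia.
  rewrite !lead_coef_agree, E' in E by lia.
  symmetry. apply Rmult_eq_reg_l in E; auto. apply Rgt_not_eq, lead_coef_pos'. lia.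
Qed.

Lemma a_agree_above_1 j : (2 <= j <= L)%nat -> a j = a' j.
Proof.
  intros Hj. assert (E := lead_coef_odd a c (L - j)). assert (E' := lead_coef_odd a' c' (L - j)).
  replace (L - (L - j))%nat with j in E, E' by lia.
  rewrite !lead_coef_agree, E' in E by lia.
  symmetry. apply Rmult_eq_reg_l in E; auto. apply Rgt_not_eq, lead_coef_pos'. lia.
Qed.

Lemma aL_cL_agree : a L * c L = a' L * c' L.
Proof.
  assert (HL := chain_len_pos Hch).
  rewrite <- (coef_order2_lead _ _ _ _ HG), <- (coef_order2_lead _ _ _ _ HG').
  apply Heq; [lia|solve_local].
Qed.

Lemma aL_cL_pos' : 0 < a' L * c' L.
Proof.
  assert (HL := chain_len_pos Hch). destruct (Hpos' L ltac:(lia)) as (? & _ & ?).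
  apply Rmult_lt_0_compat; auto.
Qed.

Lemma a_agree j : (1 <= j <= L)%nat -> a j = a' j.
Proof.
  intros Hj. destruct (Nat.eq_dec j 1) as [->|]; [|apply a_agree_above_1; lia].
  assert (cL := c_agree L ltac:(lia)). assert (Pos := aL_cL_pos').
  destruct (Nat.eq_dec L 1) as [HL1|HL1].
  - assert (E := aL_cL_agree). rewrite HL1, cL in *.
    destruct (Hpos' 1%nat ltac:(lia)) as (_ & _ & ?). apply Rmult_eq_reg_r in E; lra.
  - assert (E := coef_order3_bind _ _ _ _ HG ltac:(lia)).
    rewrite Heq, (coef_order3_bind _ _ _ _ HG'), aL_cL_agree in E by (try lia; solve_local).
    apply Rmult_eq_reg_r in E; lra.
Qed.

Lemma b_agree j : (1 <= j <= L)%nat -> b j = b' j.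
Proof.
  intros Hj. assert (cj := c_agree j Hj). assert (Pos := aL_cL_pos').
  destruct (Nat.eq_dec L 1) as [HL1|HL1].
  - assert (j = L) by lia. subst j.
    assert (E := coef_order2_U _ _ _ _ HG).
    rewrite Heq, (coef_order2_U _ _ _ _ HG'), cj in E by (try lia; solve_local).
    destruct (Hpos' L Hj) as (_ & _ & ?). apply Rmult_eq_reg_r in E; lra.
  - assert (E := coef_order3_release _ _ _ _ HG j ltac:(lia) Hj).
    rewrite Heq, (coef_order3_release _ _ _ _ HG' j), aL_cL_agree, cj in E
      by (try lia; solve_local).
    apply Rmult_eq_reg_r in E; lra.
Qed.


Lemma chain_identifiable j : (1 <= j <= L)%nat -> a j = a' j /\ b j = b' j /\ c j = c' j.
Proof. intros Hj. auto using a_agree, b_agree, c_agree. Qed.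

End Identifiability.
End Chain.

(** * The network *)

Section Network.

Variables (N : nat) (L : nat -> nat) (Y : nat -> nat) (S U : nat -> nat -> nat) (nS : nat).
Hypothesis HnS : forall x, is_species N L Y S U x -> (x < nS)%nat.
Hypothesis HH1 : H1 N L Y S U.
Hypothesis HH2 : H2 N L Y S U.

Lemma network_chain i : (i < N)%nat -> chain nS (Y i) (S i) (U i) (L i).
Proof.
  destruct HH1 as (h1 & h2 & h3 & h4 & h5).
  destruct HH2 as (M & part & hM & hb & hne & h0 & hal). intros Hi.
  destruct (hal i Hi) as (al & hal1 & hal2 & hal3).
  constructor.
  - apply h1; auto.
  - intros k Hk E. apply hal3. rewrite <- E. apply hal2; auto.
  - intros k Hk. apply (h3 i k i); auto.
  - intros k k' Hk Hk' E. apply (proj2 (h3 i k' i Hi Hk' Hi) k Hk). auto.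
  - intros k k' Hk Hk' E. apply (h4 i k k'); auto.
  - intros k k' Hk Hk' E. apply (h2 i k i k'); auto.
  - apply HnS. exists i. split; auto.
  - intros k Hk. apply HnS. exists i. split; auto. right; left. exists k; auto.
  - intros k Hk. apply HnS. exists i. split; auto. right; right. exists k; auto.
Qed.

(* (H2) is needed when both species are substrates of component [i]: they then share a part,
   which the enzyme and a substrate of component [i'] cannot. *)
Lemma foreign_binding_not_local i i' j : (i < N)%nat -> (i' < N)%nat -> i' <> i ->
  (1 <= j <= L i')%nat -> is_local (Y i) (S i) (U i) (L i) (Y i') ->
  ~ is_local (Y i) (S i) (U i) (L i) (S i' (j - 1)).
Proof.
  destruct HH1 as (h1 & h2 & h3 & h4 & h5).
  destruct HH2 as (M & part & hM & hb & hne & h0 & hal).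
  intros Hi Hi' Hne Hj HY HS.
  destruct (hal i Hi) as (al & hal1 & hal2 & hal3).
  destruct (hal i' Hi') as (al' & hal1' & hal2' & hal3').
  destruct HY as [EY|[[k [Hk EY]]|[k [Hk EY]]]];
  destruct HS as [ES|[[k' [Hk' ES]]|[k' [Hk' ES]]]].
  - apply hal3'. rewrite EY, <- ES. apply hal2'. lia.
  - apply Hne. apply (h5 i' (j - 1)%nat i k'); auto; try lia.
    apply meqb_spec. intros t. rewrite EY, ES. reflexivity.
  - apply (proj2 (h3 i k' i' Hi Hk' Hi') (j - 1)%nat); [lia|]. auto.
  - apply Hne. apply (h5 i' (j - 1)%nat i k); auto; try lia.
    apply meqb_spec. intros t. rewrite EY, ES. unfold cplx2. rewrite !mexp_madd. lia.
  - apply hal3'. rewrite EY, (hal2 k Hk), <- (hal2 k' Hk'), <- ES. apply hal2'. lia.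
  - apply (proj2 (h3 i k' i' Hi Hk' Hi') (j - 1)%nat); [lia|]. auto.
  - apply (proj1 (h3 i k i' Hi Hk Hi')). auto.
  - apply (proj1 (h3 i k i' Hi Hk Hi')). auto.
  - apply (proj1 (h3 i k i' Hi Hk Hi')). auto.
Qed.

Lemma foreign_intermediate_not_local i i' j : (i < N)%nat -> (i' < N)%nat -> i' <> i ->
  (1 <= j <= L i')%nat -> ~ is_local (Y i) (S i) (U i) (L i) (U i' j).
Proof.
  destruct HH1 as (h1 & h2 & h3 & h4 & h5). intros Hi Hi' Hne Hj HU.
  destruct HU as [E|[[k [Hk E]]|[k [Hk E]]]].
  - apply (proj1 (h3 i' j i Hi' Hj Hi)). auto.
  - apply (proj2 (h3 i' j i Hi' Hj Hi) k Hk). auto.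
  - apply Hne. apply (h2 i' j i k); auto.
Qed.

Definition component_coef (a b c : nat -> nat -> R) i l (f : nat -> nat) : R :=
  pcoef (liter nS (network N L Y S U a b c) l (pvar (S i (L i)))) (mon_of nS f).

Lemma sumR_comp_reactions y (Sp Up : nat -> nat) a b c n (g : reaction -> R) :
  sumR (comp_reactions y Sp Up a b c n) g =
  sumR (seq 1 n) (fun j => g (cplx2 y (Sp (j - 1)%nat), munit (Up j), a j)
                         + g (munit (Up j), cplx2 y (Sp (j - 1)%nat), b j)
                         + g (munit (Up j), cplx2 y (Sp j), c j)).
Proof.
  unfold comp_reactions. rewrite sumR_flat_map. apply sumR_ext. intros j _.
  rewrite !sumR_cons, sumR_nil. lra.
Qed.

Lemma mleb_mon_of_local Y0 Sp Up n f y t : local Y0 Sp Up n f -> vanishes_from nS f ->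
  mleb y (mon_of nS f) = true -> (1 <= mexp y t)%nat -> is_local Y0 Sp Up n t.
Proof.
  intros Hf Hv H Ht. apply Hf. rewrite mleb_spec in H. specialize (H t).
  rewrite mexp_mon_of in H by assumption. lia.
Qed.

Lemma component_coef_succ a b c i l f : (i < N)%nat -> local (Y i) (S i) (U i) (L i) f ->
  component_coef a b c i (Datatypes.S l) f =
  chain_step (Y i) (S i) (U i) (L i) (a i) (b i) (c i) (component_coef a b c i) l f.
Proof.
  intros Hi Hf. assert (H := network_chain i Hi).
  assert (Hv := local_vanishes_from _ _ _ _ _ H f Hf).
  unfold component_coef at 1. rewrite pcoef_liter_succ by assumption.
  unfold network at 1. rewrite sumR_flat_map.
  rewrite (sumR_single _ _ i); [|apply seq_NoDup|apply in_seq; lia|].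
  - rewrite sumR_comp_reactions. unfold chain_step. apply sumR_ext. intros j Hj. apply in_seq in Hj.
    pose proof (chain_Y_lt H). pose proof (chain_S_lt H (j - 1) ltac:(lia)).
    pose proof (chain_S_lt H j ltac:(lia)). pose proof (chain_U_lt H j ltac:(lia)).
    pose proof (chain_S_neq_Y H (j - 1) ltac:(lia)). pose proof (chain_S_neq_Y H j ltac:(lia)).
    pose proof (chain_U_neq_Y H j ltac:(lia)).
    pose proof (chain_S_neq_U H (j - 1) j ltac:(lia) ltac:(lia)).
    pose proof (chain_S_neq_U H j j ltac:(lia) ltac:(lia)).
    rewrite sum_reaction_term_association, !sum_reaction_term_dissociation by auto.
    reflexivity.
  - intros i' Hi' Hne. apply in_seq in Hi'. rewrite sumR_comp_reactions.
    apply sumR_zero. intros j Hj. apply in_seq in Hj.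
    assert (ZU : mleb (munit (U i' j)) (mon_of nS f) = false).
    { destruct (mleb (munit (U i' j)) (mon_of nS f)) eqn:E; [exfalso|reflexivity].
      apply (foreign_intermediate_not_local i i' j); auto; try lia.
      apply (mleb_mon_of_local _ _ _ _ f (munit (U i' j))); auto.
      rewrite mexp_munit, Nat.eqb_refl. lia. }
    assert (ZA : mleb (cplx2 (Y i') (S i' (j - 1)%nat)) (mon_of nS f) = false).
    { destruct (mleb (cplx2 (Y i') (S i' (j - 1)%nat)) (mon_of nS f)) eqn:E; [exfalso|reflexivity].
      apply (foreign_binding_not_local i i' j); auto; try lia;
        apply (mleb_mon_of_local _ _ _ _ f _ _ Hf Hv E); rewrite mexp_cplx2, Nat.eqb_refl;
        destruct (Nat.eqb _ _); lia. }
    rewrite !sumR_zero; [lra| | |]; intros t _; unfold reaction_term; rewrite ?ZU, ?ZA; lra.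
Qed.

Lemma network_chain_coefs a b c i : (i < N)%nat ->
  chain_coefs (Y i) (S i) (U i) (L i) (a i) (b i) (c i) (component_coef a b c i).
Proof.
  intros Hi. assert (H := network_chain i Hi). assert (HL := chain_len_pos H).
  assert (Hx : S i (L i) <> Y i) by (apply (chain_S_neq_Y H); lia).
  assert (Init : forall f, local (Y i) (S i) (U i) (L i) f ->
            component_coef a b c i 0 f = if meqb (munit (S i (L i))) (mon_of nS f) then 1 else 0)
    by (intros; unfold component_coef, pcoef, pvar; simpl; lra).
  assert (Hmeqb : forall f, local (Y i) (S i) (U i) (L i) f ->
            meqb (munit (S i (L i))) (mon_of nS f) = true <-> f = ymon (Y i) 0 (S i (L i))).
  { intros f Hf. assert (Hv := local_vanishes_from _ _ _ _ _ H f Hf). rewrite meqb_spec. split.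
    - intros E. extensionality t. specialize (E t). rewrite mexp_munit, mexp_mon_of in E by auto.
      rewrite <- E. unfold ymon.
      destruct (Nat.eqb_spec t (Y i)), (Nat.eqb_spec t (S i (L i))); subst; congruence.
    - intros E t. rewrite mexp_munit, mexp_mon_of, E by auto. unfold ymon.
      destruct (Nat.eqb_spec t (Y i)), (Nat.eqb_spec t (S i (L i))); subst; congruence. }
  assert (Hloc : local (Y i) (S i) (U i) (L i) (ymon (Y i) 0 (S i (L i))))
    by (apply local_ymon, is_local_S; lia).
  constructor.
  - intros l f Hf. apply component_coef_succ; auto.
  - rewrite Init, (proj2 (Hmeqb _ Hloc) eq_refl) by assumption. reflexivity.
  - intros f Hf Hne. rewrite Init by assumption.
    destruct (meqb _ _) eqn:E; [exfalso; apply Hne, Hmeqb|]; auto.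
Qed.

End Network.

Theorem mainTheorem2
  (N : nat) (L : nat -> nat) (Y : nat -> nat) (S U : nat -> nat -> nat) (nS : nat)
  (HnS : forall x, is_species N L Y S U x -> (x < nS)%nat)
  (HH1 : H1 N L Y S U) (HH2 : H2 N L Y S U) :
  forall a b c a' b' c' : nat -> nat -> R,
    pos_rates N L a b c -> pos_rates N L a' b' c' ->
    (forall i l, (i < N)%nat -> (1 <= l <= Nat.max 2 (2 * L i - 1))%nat ->
       peq (liter nS (network N L Y S U a b c) l (pvar (S i (L i))))
           (liter nS (network N L Y S U a' b' c') l (pvar (S i (L i))))) ->
    forall i j, (i < N)%nat -> (1 <= j <= L i)%nat ->
      a i j = a' i j /\ b i j = b' i j /\ c i j = c' i j.
Proof.
  (* Positivity of one of the two rate vectors is enough. *)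
  intros a b c a' b' c' _ Hpos' Heq i j Hi Hj.
  apply (chain_identifiable nS (Y i) (S i) (U i) (L i) (network_chain N L Y S U nS HnS HH1 HH2 i Hi)
           (a i) (b i) (c i) (a' i) (b' i) (c' i)
           (component_coef N L Y S U nS a b c i) (component_coef N L Y S U nS a' b' c' i));
    auto using network_chain_coefs.
  intros l f Hl _. apply (Heq i l Hi Hl).
Qed.
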